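(* Let a symmetric instance with $n$ actions and $k$ signals ($2\le k\le n$) be given, and let its truncated instance be obtained by removing actions $k+1,\dots,n$ and restricting every state $\boldsymbol\theta$ to $(\theta_1,\dots,\theta_k)$ (with the induced marginal distribution), keeping $k$ signals. Then there exists a direct scheme recommending actions in $[k]$ whose signal distribution depends only on $(\theta_1,\dots,\theta_k)$ that is both an optimal persuasive scheme with $k$ signals for the original instance and an optimal persuasive scheme with $k$ signals for the truncated instance; in particular the optimal sender utilities with $k$ signals of the two instances coincide.
   Context: Model: receiver chooses one of the actions; each action has a type; the state $\boldsymbol\theta$ is drawn from a known distribution $q$; each type $t$ has receiver value $\rho(t)$ and sender value $\xi(t)$. A scheme with $k$ signals maps states to distributions over $k$ signals; the receiver best-responds to her posterior with ties broken in favor of the sender; optimal means maximal sender expected utility among schemes with $k$ signals. Direct: each signal recommends an action; persuasive: for each signal sent with positive probability recommending $i$, the receiver's conditional expected value of $i$ is at least that of every available action. Symmetric instance: $q_{\boldsymbol\theta}=q_{\boldsymbol\theta'}$ whenever $\boldsymbol\theta'$ is a permutation of $\boldsymbol\theta$. *)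

From HB Require Import structures.
From mathcomp Require Import all_boot all_order all_fingroup all_algebra.
From mathcomp Require Import reals.
Set Implicit Arguments. Unset Strict Implicit. Unset Printing Implicit Defensive.
Import Order.TTheory GRing.Theory Num.Theory.
Local Open Scope ring_scope.

(* A state with m actions: each action i : 'I_m has a type theta i : T. *)
Notation state T m := {ffun 'I_m -> T}.

Definition is_distr (R : numDomainType) (T : finType) (m : nat)
  (q : state T m -> R) : Prop :=
  (forall th, 0 <= q th) /\ \sum_(th : state T m) q th = 1.

Definition is_scheme (R : numDomainType) (T : finType) (m k : nat)
  (phi : state T m -> 'I_k -> R) : Prop :=
  (forall th s, 0 <= phi th s) /\ (forall th, \sum_(s < k) phi th s = 1).

(* Joint weight: E[ f(theta_a) ; signal = s ] (unnormalized posterior value). *)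
Definition sig_weight (R : numDomainType) (T : finType) (m k : nat)
  (q : state T m -> R) (phi : state T m -> 'I_k -> R) (f : T -> R)
  (s : 'I_k) (a : 'I_m) : R :=
  \sum_(th : state T m) q th * phi th s * f (th a).

Definition sig_prob (R : numDomainType) (T : finType) (m k : nat)
  (q : state T m -> R) (phi : state T m -> 'I_k -> R) (s : 'I_k) : R :=
  \sum_(th : state T m) q th * phi th s.

Definition best_response (R : realDomainType) (T : finType) (m k : nat)
  (q : state T m -> R) (rho : T -> R) (phi : state T m -> 'I_k -> R)
  (s : 'I_k) (a : 'I_m) : bool :=
  [forall b : 'I_m, sig_weight q phi rho s b <= sig_weight q phi rho s a].

(* Sender's (unnormalized) payoff at signal s: the receiver picks a best
   response, ties broken in favour of the sender.  The default value m0 is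
   below every candidate, so the result is the max over best responses
   (nonempty as soon as m > 0). *)
Definition sender_value_at (R : realDomainType) (T : finType) (m k : nat)
  (q : state T m -> R) (rho xi : T -> R) (phi : state T m -> 'I_k -> R)
  (s : 'I_k) : R :=
  let m0 := \big[Num.min/0]_(a : 'I_m) sig_weight q phi xi s a in
  \big[Num.max/m0]_(a : 'I_m | best_response q rho phi s a)
     sig_weight q phi xi s a.

Definition sender_utility (R : realDomainType) (T : finType) (m k : nat)
  (q : state T m -> R) (rho xi : T -> R) (phi : state T m -> 'I_k -> R) : R :=
  \sum_(s < k) sender_value_at q rho xi phi s.

Definition optimal (R : realDomainType) (T : finType) (m k : nat)
  (q : state T m -> R) (rho xi : T -> R) (phi : state T m -> 'I_k -> R) : Prop :=
  is_scheme phi /\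
  forall phi' : state T m -> 'I_k -> R,
    is_scheme phi' -> sender_utility q rho xi phi' <= sender_utility q rho xi phi.

(* Direct scheme whose signal s recommends action rec s; it is persuasive if
   for every signal sent with positive probability, the recommended action
   has conditional expected receiver value at least that of every action. *)
Definition persuasive (R : realDomainType) (T : finType) (m k : nat)
  (q : state T m -> R) (rho : T -> R) (rec : 'I_k -> 'I_m)
  (phi : state T m -> 'I_k -> R) : Prop :=
  forall s : 'I_k, 0 < sig_prob q phi s ->
    forall b : 'I_m, sig_weight q phi rho s b <= sig_weight q phi rho s (rec s).

Definition symmetric_instance (R : numDomainType) (T : finType) (m : nat)
  (q : state T m -> R) : Prop :=
  forall (sigma : {perm 'I_m}) (th : state T m),
    q [ffun i => th (sigma i)] = q th.

Definition restrict (T : finType) (n k : nat) (Hkn : (k <= n)%N)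
  (th : state T n) : state T k :=
  [ffun i : 'I_k => th (widen_ord Hkn i)].

Definition marginal (R : numDomainType) (T : finType) (n k : nat)
  (Hkn : (k <= n)%N) (q : state T n -> R) (th' : state T k) : R :=
  \sum_(th : state T n | restrict Hkn th == th') q th.

From HB Require Import structures.
From mathcomp Require Import all_boot all_order all_fingroup all_algebra.
From mathcomp Require Import reals boolp classical_sets topology normedtype derive.
Import Order.TTheory GRing.Theory Num.Theory.
Set Implicit Arguments. Unset Strict Implicit. Unset Printing Implicit Defensive.
Local Open Scope ring_scope.

(* The common benchmark is V, the best value of a persuasive direct scheme of
   the truncated instance (signal s recommends action s).
   - Upper bound (revelation principle, [direct_reduction]): by symmetry of
     the prior, any scheme with k signals, of the full or of the truncated
     instance, can be turned into a persuasive direct scheme of the truncated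
     instance of at least its utility; so every utility is at most V.
   - V is attained ([exists_direct_optimal]): persuasive direct schemes form a
     nonempty compact set of vectors and the value is continuous.
   - Averaging an optimal direct scheme over all relabellings of the first k
     actions ([symmetrize]) keeps it optimal and persuasive, and makes it
     persuasive in the full instance too ([symmetrize_full_persuasive]): an
     action beyond k is worth, at every signal, the average of the first k.
   The symmetrized scheme therefore attains V in both instances. *)

Section SenderValue.
Variables (R : realDomainType) (T : finType) (m k : nat).
Variables (q : state T m -> R) (rho xi : T -> R) (phi : state T m -> 'I_k -> R).

Lemma sender_value_ge (s : 'I_k) (a : 'I_m) :
  best_response q rho phi s a ->
  sig_weight q phi xi s a <= sender_value_at q rho xi phi s.
Proof. exact: le_bigmax_cond. Qed.

Lemma sender_value_attained (s : 'I_k) : (0 < m)%N ->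
  exists a, best_response q rho phi s a /\
    sender_value_at q rho xi phi s <= sig_weight q phi xi s a.
Proof.
move=> m_gt0; pose a0 : 'I_m := Ordinal m_gt0.
pose b := [arg max_(a > a0) sig_weight q phi rho s a]%O.
have br_b : best_response q rho phi s b.
  by rewrite /b; case: arg_maxP => //= a _ amax; apply/forallP => c; exact: amax.
exists [arg max_(a > b | best_response q rho phi s a) sig_weight q phi xi s a]%O.
case: arg_maxP => //= a br_a amax; split=> //.
by apply: bigmax_le => [|c /amax//]; exact: bigmin_le.
Qed.

End SenderValue.

Lemma recommended_weight_le_utility (R : realDomainType) (T : finType) (m k : nat)
    (q : state T m -> R) (rho xi : T -> R) (phi : state T m -> 'I_k -> R)
    (rec : 'I_k -> 'I_m) :
  (forall s b, sig_weight q phi rho s b <= sig_weight q phi rho s (rec s)) ->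
  \sum_(s < k) sig_weight q phi xi s (rec s) <= sender_utility q rho xi phi.
Proof.
move=> rec_br; apply: ler_sum => s _; apply: sender_value_ge.
by apply/forallP => b; exact: rec_br.
Qed.

Definition relabel (T : finType) (m : nat) (sigma : {perm 'I_m}) (th : state T m) :
  state T m := [ffun i => th (sigma i)].

Section Relabel.
Variables (T : finType) (m : nat).
Implicit Types (sigma tau : {perm 'I_m}) (th : state T m).

Lemma relabelM sigma tau th : relabel sigma (relabel tau th) = relabel (sigma * tau) th.
Proof. by apply/ffunP => i; rewrite !ffunE permM. Qed.

Lemma relabel1 th : relabel 1 th = th.
Proof. by apply/ffunP => i; rewrite ffunE perm1. Qed.

Lemma relabelK sigma : cancel (@relabel T m sigma) (relabel sigma^-1).
Proof. by move=> th; rewrite relabelM mulVg relabel1. Qed.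

Lemma relabel_inj sigma : injective (@relabel T m sigma).
Proof. exact: can_inj (relabelK sigma). Qed.

End Relabel.

Section SymmetricInstance.
Variables (R : numDomainType) (T : finType) (m : nat) (q : state T m -> R).
Hypothesis q_sym : symmetric_instance q.

Lemma sum_relabel (sigma : {perm 'I_m}) (G : state T m -> R) :
  \sum_th q th * G th = \sum_th q th * G (relabel sigma th).
Proof.
rewrite (reindex_inj (@relabel_inj T m sigma)); apply: eq_bigr => th _.
by rewrite [q _]q_sym.
Qed.

Lemma sig_weight_relabel (k : nat) (phi : state T m -> 'I_k -> R) (f : T -> R)
    (sigma : {perm 'I_m}) (s : 'I_k) (b : 'I_m) :
  sig_weight q (fun th => phi (relabel sigma th)) f s b =
  sig_weight q phi f s ((sigma^-1)%g b).
Proof.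
rewrite /sig_weight; under eq_bigr do rewrite -mulrA.
rewrite (sum_relabel (sigma^-1)%g); apply: eq_bigr => th _.
by rewrite relabelM mulgV relabel1 ffunE mulrA.
Qed.

Lemma action_mean_eq (f : T -> R) (a b : 'I_m) :
  \sum_th q th * f (th a) = \sum_th q th * f (th b).
Proof.
rewrite (sum_relabel (tperm a b)); apply: eq_bigr => th _.
by rewrite ffunE tpermL.
Qed.

End SymmetricInstance.

Lemma sum_point_mass (R : numDomainType) (k : nat) (s0 : 'I_k) :
  \sum_(s < k) ((s == s0)%:R : R) = 1.
Proof. by rewrite (bigD1 s0) //= eqxx big1 ?addr0 // => s /negbTE ->. Qed.

Lemma scheme_precompose (R : numDomainType) (T : finType) (m m' k : nat)
    (h : state T m -> state T m') (psi : state T m' -> 'I_k -> R) :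
  is_scheme psi -> is_scheme (fun th => psi (h th)).
Proof. by case=> psi_ge0 psi_sum1; split=> [th s|th]; [exact: psi_ge0|exact: psi_sum1]. Qed.

Section PrefixPerm.
Variables (n k : nat) (Hkn : (k <= n)%N) (t : {perm 'I_k}).

Definition prefix_fun (x : 'I_n) : 'I_n :=
  if insub (val x) is Some y then widen_ord Hkn (t y) else x.

Lemma prefix_fun_widen (j : 'I_k) : prefix_fun (widen_ord Hkn j) = widen_ord Hkn (t j).
Proof. by rewrite /prefix_fun /= valK. Qed.

Lemma prefix_fun_out (x : 'I_n) : (k <= x)%N -> prefix_fun x = x.
Proof. by move=> x_ge; rewrite /prefix_fun insubF // ltnNge x_ge. Qed.

End PrefixPerm.

Lemma prefix_funK (n k : nat) (Hkn : (k <= n)%N) (t : {perm 'I_k}) :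
  cancel (prefix_fun Hkn t) (prefix_fun Hkn t^-1).
Proof.
move=> x; case: (ltnP x k) => [x_lt|x_ge]; last by rewrite !prefix_fun_out.
have -> : x = widen_ord Hkn (Ordinal x_lt) by apply: val_inj.
by rewrite !prefix_fun_widen permK.
Qed.

Definition prefix_perm (n k : nat) (Hkn : (k <= n)%N) (t : {perm 'I_k}) : {perm 'I_n} :=
  perm (can_inj (prefix_funK Hkn t)).

Lemma restrict_relabel (T : finType) (n k : nat) (Hkn : (k <= n)%N) (t : {perm 'I_k})
    (th : state T n) :
  restrict Hkn (relabel (prefix_perm Hkn t) th) = relabel t (restrict Hkn th).
Proof. by apply/ffunP => j; rewrite !ffunE permE prefix_fun_widen. Qed.

Section Truncation.
Variables (R : numDomainType) (T : finType) (n k : nat) (Hkn : (k <= n)%N).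
Variable q : state T n -> R.

Lemma sum_restrict (G : state T k -> R) :
  \sum_th q th * G (restrict Hkn th) = \sum_th' marginal Hkn q th' * G th'.
Proof.
rewrite (partition_big (restrict Hkn) predT) //=; apply: eq_bigr => th' _.
by rewrite mulr_suml; apply: eq_bigr => th /eqP <-.
Qed.

Lemma sig_weight_restrict (l : nat) (psi : state T k -> 'I_l -> R) (f : T -> R)
    (s : 'I_l) (b : 'I_k) :
  sig_weight q (fun th => psi (restrict Hkn th)) f s (widen_ord Hkn b) =
  sig_weight (marginal Hkn q) psi f s b.
Proof.
rewrite /sig_weight; under [RHS]eq_bigr do rewrite -mulrA.
rewrite -(sum_restrict (fun th' => psi th' s * f (th' b))).
by apply: eq_bigr => th _; rewrite ffunE mulrA.
Qed.

Lemma marginal_ge0 : (forall th, 0 <= q th) -> forall th', 0 <= marginal Hkn q th'.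
Proof. by move=> q_ge0 th'; apply: sumr_ge0. Qed.

Lemma marginal_symmetric : symmetric_instance q -> symmetric_instance (marginal Hkn q).
Proof.
move=> q_sym t th'; rewrite /marginal.
rewrite (reindex_inj (@relabel_inj T n (prefix_perm Hkn t))) /=.
apply: eq_big => [th|th _]; last exact: q_sym.
rewrite restrict_relabel; apply/eqP/eqP => [/relabel_inj -> //|<-].
by apply/ffunP => j; rewrite !ffunE.
Qed.

End Truncation.

Lemma marginal_full (R : numDomainType) (T : finType) (k : nat) (q : state T k -> R) :
  marginal (leqnn k) q = q.
Proof.
apply: funext => th'; rewrite /marginal.
have restrict_id (th : state T k) : restrict (leqnn k) th = th.
  by apply/ffunP => j; rewrite ffunE; congr (th _); apply: val_inj.
by under eq_bigl do rewrite restrict_id; rewrite big_pred1_eq.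
Qed.

(* Direct schemes on an instance with k actions and k signals: signal s
   recommends action s. *)
Definition direct_persuasive (R : realDomainType) (T : finType) (k : nat)
    (q : state T k -> R) (rho : T -> R) (psi : state T k -> 'I_k -> R) : Prop :=
  forall s b : 'I_k, sig_weight q psi rho s b <= sig_weight q psi rho s s.

Definition direct_value (R : realDomainType) (T : finType) (k : nat)
    (q : state T k -> R) (xi : T -> R) (psi : state T k -> 'I_k -> R) : R :=
  \sum_(s < k) sig_weight q psi xi s s.

(* Every set of at most k actions can be moved into the first k positions by
   a permutation: list the set first and its complement next. *)
Lemma perm_into_prefix (m k : nat) (A : {set 'I_m}) : (#|A| <= k)%N ->
  exists sigma : {perm 'I_m}, forall x, x \in A -> (sigma x < k)%N.
Proof.
move=> cardA; pose e := enum A ++ enum (~: A).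
have e_all x : x \in e by rewrite mem_cat !mem_enum inE orbN.
have size_e : size e = m by rewrite size_cat -!cardE cardsC card_ord.
have index_lt x : (index x e < m)%N by rewrite -[X in (_ < X)%N]size_e index_mem.
have pos_inj : injective (fun x => Ordinal (index_lt x)).
  move=> x y /(congr1 val) /= Exy.
  by rewrite -(nth_index x (e_all x)) Exy nth_index.
exists (perm pos_inj) => x xA; rewrite permE /= index_cat mem_enum xA.
by apply: leq_trans cardA; rewrite cardE index_mem mem_enum.
Qed.

Definition coarsen (R : numDomainType) (T : finType) (m k l : nat)
    (phi : state T m -> 'I_k -> R) (g : 'I_k -> 'I_l) (th : state T m) (j : 'I_l) : R :=
  \sum_(s | g s == j) phi th s.

Section Coarsen.
Variables (R : numDomainType) (T : finType) (m k l : nat).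
Variables (phi : state T m -> 'I_k -> R) (g : 'I_k -> 'I_l).

Lemma coarsen_scheme : is_scheme phi -> is_scheme (coarsen phi g).
Proof.
move=> [phi_ge0 phi_sum1]; split=> [th j|th]; first exact: sumr_ge0.
by rewrite -(phi_sum1 th) [RHS](partition_big g predT).
Qed.

Lemma sig_weight_coarsen (q : state T m -> R) (f : T -> R) (j : 'I_l) (b : 'I_m) :
  sig_weight q (coarsen phi g) f j b = \sum_(s | g s == j) sig_weight q phi f s b.
Proof.
rewrite /sig_weight exchange_big; apply: eq_bigr => th _.
by rewrite mulr_sumr mulr_suml.
Qed.

End Coarsen.

(* Where the marginal vanishes, send signal s0. *)
Lemma conditional_scheme (R : realFieldType) (T : finType) (n k l : nat)
    (Hkn : (k <= n)%N) (s0 : 'I_l) (q : state T n -> R) (phi : state T n -> 'I_l -> R) :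
  (forall th, 0 <= q th) -> is_scheme phi ->
  exists2 psi : state T k -> 'I_l -> R, is_scheme psi &
    forall f s b, sig_weight (marginal Hkn q) psi f s b = sig_weight q phi f s (widen_ord Hkn b).
Proof.
move=> q_ge0 [phi_ge0 phi_sum1].
pose joint th' s := \sum_(th | restrict Hkn th == th') q th * phi th s.
pose psi th' s := if marginal Hkn q th' == 0 then (s == s0)%:R
                  else joint th' s / marginal Hkn q th'.
have joint_eq th' s : marginal Hkn q th' * psi th' s = joint th' s.
  rewrite /psi; case: eqP => [q'0|/eqP q'_neq0]; last by rewrite mulrC divfK.
  have q_th0 := psumr_eq0P (fun th _ => q_ge0 th) q'0.
  by rewrite q'0 mul0r; apply/esym/big1 => th /q_th0 ->; rewrite mul0r.
exists psi; first split.
- move=> th' s; rewrite /psi; case: eqP => _; first exact: ler0n.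
  apply: divr_ge0; last exact: marginal_ge0.
  by apply: sumr_ge0 => th _; apply: mulr_ge0.
- move=> th'; rewrite /psi; case: eqP => [_|/eqP q'_neq0].
    exact: sum_point_mass.
  rewrite -mulr_suml /joint exchange_big /=.
  under eq_bigr do rewrite -mulr_sumr phi_sum1 mulr1.
  exact: divff.
- move=> f s b; rewrite /sig_weight; under eq_bigr do rewrite joint_eq.
  rewrite (partition_big (restrict Hkn) predT) //=; apply: eq_bigr => th' _.
  by rewrite mulr_suml; apply: eq_bigr => th /eqP <-; rewrite ffunE.
Qed.

(* Replace
   each signal by the sender-preferred best response a s; relabel the actions
   so that these recommendations lie among the first k; merge signals that
   recommend the same action; and condition on the first k coordinates. *)
Lemma direct_reduction (R : realFieldType) (T : finType) (m k : nat)
    (Hkm : (k <= m)%N) (k_gt0 : (0 < k)%N) (q : state T m -> R) (rho xi : T -> R)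
    (phi : state T m -> 'I_k -> R) :
  (forall th, 0 <= q th) -> symmetric_instance q -> is_scheme phi ->
  exists2 psi, is_scheme psi /\ direct_persuasive (marginal Hkm q) rho psi &
    sender_utility q rho xi phi <= direct_value (marginal Hkm q) xi psi.
Proof.
move=> q_ge0 q_sym phi_sch; pose s0 : 'I_k := Ordinal k_gt0.
have [a a_best] := fin_all_exists (fun s =>
  sender_value_attained q rho xi phi s (leq_trans k_gt0 Hkm)).
have [sigma sigma_a] : exists sigma : {perm 'I_m}, forall s, (sigma (a s) < k)%N.
  have card_img : (#|[set a s | s in 'I_k]| <= k)%N.
    by rewrite -[X in (_ <= X)%N]card_ord leq_imset_card.
  have [sigma Hsigma] := perm_into_prefix card_img.
  by exists sigma => s; apply/Hsigma/imset_f.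
pose rec s : 'I_k := insubd s0 (sigma (a s)).
have widen_rec s : widen_ord Hkm (rec s) = sigma (a s).
  by apply: val_inj; rewrite /= val_insubd sigma_a.
have [psi psi_sch psi_weight] := conditional_scheme Hkm s0 q_ge0
  (coarsen_scheme rec (scheme_precompose (relabel sigma) phi_sch)).
have weight_psi f j b : sig_weight (marginal Hkm q) psi f j b =
    \sum_(s | rec s == j) sig_weight q phi f s ((sigma^-1)%g (widen_ord Hkm b)).
  by rewrite psi_weight sig_weight_coarsen; apply: eq_bigr => s _; rewrite sig_weight_relabel.
have weight_rec f j : sig_weight (marginal Hkm q) psi f j j =
    \sum_(s | rec s == j) sig_weight q phi f s (a s).
  by rewrite weight_psi; apply: eq_bigr => s /eqP <-; rewrite widen_rec permK.
exists psi; first split=> // j b.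
  rewrite weight_rec weight_psi; apply: ler_sum => s _.
  by have [/forallP br _] := a_best s; exact: br.
rewrite /direct_value; under eq_bigr do rewrite weight_rec.
rewrite [leLHS](partition_big rec predT) //; apply: ler_sum => j _.
by apply: ler_sum => s _; have [_ ->] := a_best s.
Qed.

Lemma sum_perm (V : nmodType) (k : nat) (t : {perm 'I_k}) (F : 'I_k -> V) :
  \sum_(i < k) F (t i) = \sum_(i < k) F i.
Proof. by rewrite [RHS](reindex_perm t). Qed.

Definition symmetrize (R : numFieldType) (T : finType) (k : nat)
    (psi : state T k -> 'I_k -> R) (th : state T k) (i : 'I_k) : R :=
  #|{perm 'I_k}|%:R^-1 * \sum_(t : {perm 'I_k}) psi (relabel t^-1 th) (t i).

Section Symmetrize.
Variables (R : realFieldType) (T : finType) (k : nat).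
Variables (q : state T k -> R) (psi : state T k -> 'I_k -> R).
Hypothesis q_sym : symmetric_instance q.

Let N : R := #|{perm 'I_k}|%:R.

Lemma card_perm_neq0 : N != 0.
Proof. by rewrite pnatr_eq0 -lt0n; apply/card_gt0P; exists 1%g. Qed.

Lemma symmetrize_equivariant (t : {perm 'I_k}) (th : state T k) (i : 'I_k) :
  symmetrize psi (relabel t th) i = symmetrize psi th (t i).
Proof.
rewrite /symmetrize (reindex_inj (mulgI t)); congr (_ * _); apply: eq_bigr => u _.
by rewrite relabelM invMg mulgKV permM.
Qed.

Lemma sig_weight_symmetrize (f : T -> R) (i b : 'I_k) :
  sig_weight q (symmetrize psi) f i b =
  N^-1 * \sum_(t : {perm 'I_k}) sig_weight q psi f (t i) (t b).
Proof.
transitivity (N^-1 * \sum_(t : {perm 'I_k})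
    sig_weight q (fun th => psi (relabel t^-1 th)) f (t i) b); last first.
  by congr (_ * _); apply: eq_bigr => t _; rewrite sig_weight_relabel // invgK.
rewrite /sig_weight mulr_sumr; under [RHS]eq_bigr do rewrite mulr_sumr.
rewrite [RHS]exchange_big; apply: eq_bigr => th _ /=.
rewrite /symmetrize mulrA big_distrr big_distrl; apply: eq_bigr => t _ /=.
by rewrite -!mulrA mulrCA.
Qed.

Lemma symmetrize_scheme : is_scheme psi -> is_scheme (symmetrize psi).
Proof.
move=> [psi_ge0 psi_sum1]; split=> [th i|th].
  by apply: mulr_ge0; [rewrite invr_ge0 ler0n|apply: sumr_ge0].
rewrite -mulr_sumr exchange_big /=.
under eq_bigr => t _ do rewrite (sum_perm t (psi (relabel t^-1 th))) psi_sum1.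
by rewrite sumr_const mulVf // card_perm_neq0.
Qed.

Lemma symmetrize_persuasive (rho : T -> R) :
  direct_persuasive q rho psi -> direct_persuasive q rho (symmetrize psi).
Proof.
move=> psi_pers i b; rewrite !sig_weight_symmetrize ler_wpM2l ?invr_ge0 ?ler0n //.
by apply: ler_sum => t _; exact: psi_pers.
Qed.

Lemma symmetrize_value (xi : T -> R) :
  direct_value q xi (symmetrize psi) = direct_value q xi psi.
Proof.
rewrite /direct_value; under eq_bigr do rewrite sig_weight_symmetrize.
rewrite -mulr_sumr exchange_big /=.
under eq_bigr => t _ do rewrite (sum_perm t (fun s => sig_weight q psi xi s s)).
by rewrite sumr_const -mulr_natr mulrCA mulVf ?mulr1 // card_perm_neq0.
Qed.

End Symmetrize.

(* A symmetrized scheme of the truncated instance, run on the full instance,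
   spreads the prior evenly over its signals: every signal carries a 1/k
   share of the expectation of any quantity invariant under relabelling of
   the first k actions. Persuasiveness then extends to the actions beyond k. *)
Section FullPersuasion.
Variables (R : realFieldType) (T : finType) (n k : nat) (Hkn : (k <= n)%N).
Variables (q : state T n -> R) (psi : state T k -> 'I_k -> R).
Hypothesis q_sym : symmetric_instance q.

Let phi (th : state T n) : 'I_k -> R := symmetrize psi (restrict Hkn th).

Definition prefix_invariant (g : state T n -> R) : Prop :=
  forall t th, g (relabel (prefix_perm Hkn t) th) = g th.

Lemma symmetrize_signal_swap (g : state T n -> R) (i j : 'I_k) :
  prefix_invariant g ->
  \sum_th q th * (phi th i * g th) = \sum_th q th * (phi th j * g th).
Proof.
move=> g_inv; rewrite (sum_relabel q_sym (prefix_perm Hkn (tperm i j))).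
by apply: eq_bigr => th _; rewrite /phi restrict_relabel symmetrize_equivariant tpermL g_inv.
Qed.

Lemma symmetrize_signal_share (g : state T n -> R) (i : 'I_k) :
  is_scheme psi -> prefix_invariant g ->
  (\sum_th q th * (phi th i * g th)) *+ k = \sum_th q th * g th.
Proof.
move=> psi_sch g_inv; have [_ phi_sum1] := symmetrize_scheme psi_sch.
rewrite -[X in _ *+ X]card_ord -sumr_const.
under eq_bigr => j _ do rewrite (symmetrize_signal_swap i j g_inv).
rewrite exchange_big; apply: eq_bigr => th _.
by rewrite -mulr_sumr -mulr_suml phi_sum1 mul1r.
Qed.

Lemma symmetrize_full_persuasive (rho : T -> R) :
  is_scheme psi -> direct_persuasive (marginal Hkn q) rho (symmetrize psi) ->
  forall (i : 'I_k) (b : 'I_n),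
    sig_weight q phi rho i b <= sig_weight q phi rho i (widen_ord Hkn i).
Proof.
move=> psi_sch pers i b; have k_gt0 : (0 < k)%N by case: (k) i => [[]|].
case: (ltnP b k) => [b_lt|b_ge].
  have -> : b = widen_ord Hkn (Ordinal b_lt) by apply: val_inj.
  by rewrite !sig_weight_restrict; exact: pers.
pose mu := \sum_th q th * rho (th b).
have weight_b : sig_weight q phi rho i b *+ k = mu.
  rewrite /sig_weight; under eq_bigr do rewrite -mulrA.
  apply: symmetrize_signal_share => // t th.
  by rewrite ffunE permE prefix_fun_out.
pose prefix_total th := \sum_(j < k) rho (th (widen_ord Hkn j)).
have weight_prefix : \sum_(j < k) sig_weight q phi rho i (widen_ord Hkn j) = mu.
  apply: (pmulrnI k_gt0).
  transitivity ((\sum_th q th * (phi th i * prefix_total th)) *+ k).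
    congr (_ *+ _); rewrite exchange_big; apply: eq_bigr => th _.
    by rewrite /prefix_total !mulr_sumr; apply: eq_bigr => j _; rewrite mulrA.
  rewrite symmetrize_signal_share //; last first.
    move=> t th; rewrite /prefix_total -[RHS](sum_perm t).
    by apply: eq_bigr => j _; rewrite ffunE permE prefix_fun_widen.
  rewrite /prefix_total; under eq_bigr do rewrite mulr_sumr.
  rewrite exchange_big -[X in _ = _ *+ X]card_ord -sumr_const.
  by apply: eq_bigr => j _; exact: action_mean_eq.
rewrite -(ler_pMn2r k_gt0) weight_b -weight_prefix.
rewrite -[X in _ *+ X]card_ord -sumr_const; apply: ler_sum => j _.
by rewrite !sig_weight_restrict; exact: pers.
Qed.

End FullPersuasion.

Definition direct_optimal (R : realDomainType) (T : finType) (k : nat)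
    (q : state T k -> R) (rho xi : T -> R) (psi : state T k -> 'I_k -> R) : Prop :=
  [/\ is_scheme psi, direct_persuasive q rho psi &
      forall psi', is_scheme psi' -> direct_persuasive q rho psi' ->
        direct_value q xi psi' <= direct_value q xi psi].

Section DirectOptimum.
Import numFieldNormedType.Exports.
Local Open Scope classical_set_scope.

Lemma continuous_sum (R : realType) (X : topologicalType) (I : Type) (r : seq I)
    (F : I -> X -> R) :
  (forall i, continuous (F i)) -> continuous (fun x => \sum_(i <- r) F i x).
Proof. by move=> F_cont; apply: continuous_big => //; exact: add_continuous. Qed.

Lemma closed_le_continuous (R : realType) (X : topologicalType) (g h : X -> R) :
  continuous g -> continuous h -> closed [set x | g x <= h x].
Proof.
move=> g_cont h_cont.
have -> : [set x | g x <= h x] = (fun x => h x - g x) @^-1` [set y | 0 <= y].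
  by apply/seteqP; split => x /=; rewrite subr_ge0.
have diff_cont : continuous (fun x => h x - g x).
  by move=> x; apply: continuousB; [exact: h_cont|exact: g_cont].
exact: (proj1 (continuous_closedP _) diff_cont _ (@closed_ge R 0)).
Qed.

Lemma closed_forall (X : topologicalType) (I : Type) (S : I -> set X) :
  (forall i, closed (S i)) -> closed [set x | forall i, S i x].
Proof.
move=> S_closed; have -> : [set x | forall i, S i x] = \bigcap_(i in setT) S i.
  by apply/seteqP; split => x /= Sx i //; apply: Sx.
by apply: closed_bigI => i _; exact: S_closed.
Qed.

Variables (R : realType) (T : finType) (k : nat).
Variables (q : state T k -> R) (rho xi : T -> R).

(* Schemes are encoded as row vectors indexed by (state, signal) pairs; in
   these coordinates the sender and receiver weights are continuous. *)
Let N := #|{: state T k * 'I_k}|.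

Let of_vec (v : 'rV[R]_N) : state T k -> 'I_k -> R :=
  fun th s => v ord0 (enum_rank (th, s)).

Let of_vecK (psi : state T k -> 'I_k -> R) :
  of_vec (\row_j psi (enum_val j).1 (enum_val j).2) = psi.
Proof. by apply/funext => th; apply/funext => s; rewrite /of_vec mxE enum_rankK. Qed.

Let continuous_sig_weight (f : T -> R) (s b : 'I_k) :
  continuous (fun v => sig_weight q (of_vec v) f s b).
Proof.
apply: continuous_sum => th v.
apply: (@continuousM R _ (fun v => q th * of_vec v th s) (fun=> f (th b))).
  by apply: continuousM; [exact: cst_continuous|exact: coord_continuous].
exact: cst_continuous.
Qed.

(* The persuasive direct schemes form a nonempty compact set, on which the
   continuous value attains its maximum. *)
Lemma exists_direct_optimal :
  (exists psi, is_scheme psi /\ direct_persuasive q rho psi) ->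
  exists psi, direct_optimal q rho xi psi.
Proof.
move=> [psi1 [psi1_sch psi1_pers]].
pose A := [set v | is_scheme (of_vec v) /\ direct_persuasive q rho (of_vec v)].
have coord_cont j : continuous (fun v : 'rV[R]_N => v ord0 j) by exact: coord_continuous.
have sum_cont th : continuous (fun v => \sum_(s < k) of_vec v th s).
  by apply: continuous_sum => s; exact: coord_cont.
have closed_ge0 : closed [set v | forall th s, 0 <= of_vec v th s].
  apply: closed_forall => th; apply: closed_forall => s.
  by apply: closed_le_continuous; [exact: cst_continuous|exact: coord_cont].
have closed_sum_le : closed [set v | forall th, \sum_(s < k) of_vec v th s <= 1].
  by apply: closed_forall => th; apply: closed_le_continuous; [|exact: cst_continuous].
have closed_sum_ge : closed [set v | forall th, 1 <= \sum_(s < k) of_vec v th s].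
  by apply: closed_forall => th; apply: closed_le_continuous; [exact: cst_continuous|].
have closed_pers : closed [set v | direct_persuasive q rho (of_vec v)].
  by do 2!apply: closed_forall => ?; exact: closed_le_continuous.
have A_closed : closed A.
  have -> : A = [set v | forall th s, 0 <= of_vec v th s] `&`
      [set v | forall th, \sum_(s < k) of_vec v th s <= 1] `&`
      [set v | forall th, 1 <= \sum_(s < k) of_vec v th s] `&`
      [set v | direct_persuasive q rho (of_vec v)].
    apply/seteqP; split => v /= [].
      move=> [v_ge0 v_sum1] v_pers.
      by split; [split; [split|]|] => // th; rewrite v_sum1.
    move=> [[v_ge0 v_le1] v_ge1] v_pers; split=> //; split=> // th.
    by apply/le_anti; rewrite v_le1 v_ge1.
  by do !apply: closedI.
have A_compact : compact A.
  apply: (subclosed_compact A_closed (rV_compact (fun=> @segment_compact R 0 1))).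
  move=> v [[v_ge0 v_sum1] _] j /=.
  have -> : v ord0 j = of_vec v (enum_val j).1 (enum_val j).2.
    by rewrite /of_vec -surjective_pairing enum_valK.
  rewrite in_itv /= v_ge0 -(v_sum1 (enum_val j).1) (bigD1 (enum_val j).2) //=.
  by rewrite lerDl sumr_ge0.
have A_nonempty : A !=set0.
  by exists (\row_j psi1 (enum_val j).1 (enum_val j).2); rewrite /A /= of_vecK.
have value_cont : continuous (fun v => direct_value q xi (of_vec v)).
  by apply: continuous_sum => s; exact: continuous_sig_weight.
have [c /set_mem [c_sch c_pers] c_max] :=
  compact_EVT_max A_nonempty A_compact (continuous_subspaceT value_cont).
exists (of_vec c); split=> // psi psi_sch psi_pers.
have := c_max (\row_j psi (enum_val j).1 (enum_val j).2); rewrite of_vecK; apply.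
by apply: mem_set; rewrite /A /= of_vecK.
Qed.

End DirectOptimum.

Lemma optimal_of_upper_bound (R : realDomainType) (T : finType) (m k : nat)
    (q : state T m -> R) (rho xi : T -> R) (phi : state T m -> 'I_k -> R) (V : R) :
  is_scheme phi ->
  (forall phi' : state T m -> 'I_k -> R, is_scheme phi' -> sender_utility q rho xi phi' <= V) ->
  V <= sender_utility q rho xi phi ->
  optimal q rho xi phi /\ sender_utility q rho xi phi = V.
Proof.
move=> phi_sch utility_le V_le; split; last by apply/le_anti; rewrite V_le utility_le.
by split=> // phi' /utility_le /le_trans; apply.
Qed.

Lemma utility_le_direct_optimum (R : realFieldType) (T : finType) (m k : nat)
    (Hkm : (k <= m)%N) (k_gt0 : (0 < k)%N) (q : state T m -> R) (rho xi : T -> R)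
    (psi0 : state T k -> 'I_k -> R) :
  (forall th, 0 <= q th) -> symmetric_instance q ->
  direct_optimal (marginal Hkm q) rho xi psi0 ->
  forall phi : state T m -> 'I_k -> R, is_scheme phi ->
    sender_utility q rho xi phi <= direct_value (marginal Hkm q) xi psi0.
Proof.
move=> q_ge0 q_sym [_ _ psi0_max] phi phi_sch.
have [psi [psi_sch psi_pers] le_psi] := direct_reduction Hkm k_gt0 rho xi q_ge0 q_sym phi_sch.
exact: le_trans le_psi (psi0_max _ psi_sch psi_pers).
Qed.

Lemma utility_le_own_direct_optimum (R : realFieldType) (T : finType) (k : nat)
    (k_gt0 : (0 < k)%N) (q : state T k -> R) (rho xi : T -> R)
    (psi0 : state T k -> 'I_k -> R) :
  (forall th, 0 <= q th) -> symmetric_instance q -> direct_optimal q rho xi psi0 ->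
  forall phi : state T k -> 'I_k -> R, is_scheme phi ->
    sender_utility q rho xi phi <= direct_value q xi psi0.
Proof.
move=> q_ge0 q_sym psi0_opt.
have := utility_le_direct_optimum (Hkm := leqnn k) (psi0 := psi0) k_gt0 q_ge0 q_sym.
by rewrite !marginal_full; apply.
Qed.

(* The truncated instance of a symmetric instance has an optimal persuasive
   direct scheme; a witness of persuasiveness comes from reducing the scheme
   that always sends the same signal. *)
Lemma exists_direct_optimal_truncation (R : realType) (T : finType) (n k : nat)
    (Hkn : (k <= n)%N) (k_gt0 : (0 < k)%N) (q : state T n -> R) (rho xi : T -> R) :
  (forall th, 0 <= q th) -> symmetric_instance q ->
  exists psi0, direct_optimal (marginal Hkn q) rho xi psi0.
Proof.
move=> q_ge0 q_sym; apply: exists_direct_optimal.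
have point_sch : is_scheme (fun (_ : state T n) (s : 'I_k) => (s == Ordinal k_gt0)%:R : R).
  by split=> [th s|th]; [exact: ler0n|exact: sum_point_mass].
have [psi psi_ok _] := direct_reduction Hkn k_gt0 rho xi q_ge0 q_sym point_sch.
by exists psi.
Qed.

Theorem propositionC1 (R : realType) (T : finType) (n k : nat)
  (Hk2 : (2 <= k)%N) (Hkn : (k <= n)%N)
  (q : {ffun 'I_n -> T} -> R) (rho xi : T -> R) :
  is_distr q -> symmetric_instance q ->
  exists psi : {ffun 'I_k -> T} -> 'I_k -> R,
    let phi := fun th : {ffun 'I_n -> T} => psi (restrict Hkn th) in
    [/\ persuasive q rho (widen_ord Hkn) phi,
        optimal q rho xi phi,
        persuasive (marginal Hkn q) rho id psi,
        optimal (marginal Hkn q) rho xi psi &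
        sender_utility q rho xi phi = sender_utility (marginal Hkn q) rho xi psi].
Proof.
move=> [q_ge0 _] q_sym; have k_gt0 : (0 < k)%N := ltnW Hk2.
pose q' := marginal Hkn q.
have q'_ge0 := marginal_ge0 Hkn q_ge0; have q'_sym := marginal_symmetric Hkn q_sym.
(* V is the value of psi0; its symmetrization psi is the common optimum. *)
have [psi0 psi0_opt] := exists_direct_optimal_truncation Hkn k_gt0 rho xi q_ge0 q_sym.
have [psi0_sch psi0_pers _] := psi0_opt.
pose psi := symmetrize psi0; have psi_sch : is_scheme psi := symmetrize_scheme psi0_sch.
have psi_pers : direct_persuasive q' rho psi := symmetrize_persuasive q'_sym psi0_pers.
have full_pers := symmetrize_full_persuasive q_sym psi0_sch psi_pers.
(* No scheme of either instance exceeds V, and psi attains V in both. *)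
have ub_full := utility_le_direct_optimum k_gt0 q_ge0 q_sym psi0_opt.
have ub_trunc := utility_le_own_direct_optimum k_gt0 q'_ge0 q'_sym psi0_opt.
have lb_full :
    direct_value q' xi psi0 <= sender_utility q rho xi (fun th => psi (restrict Hkn th)).
  rewrite -(symmetrize_value psi0 q'_sym) /direct_value.
  under eq_bigr do rewrite -sig_weight_restrict.
  exact: recommended_weight_le_utility.
have lb_trunc : direct_value q' xi psi0 <= sender_utility q' rho xi psi.
  by rewrite -(symmetrize_value psi0 q'_sym); exact: recommended_weight_le_utility.
have [opt_full utility_full] :=
  optimal_of_upper_bound (scheme_precompose (restrict Hkn) psi_sch) ub_full lb_full.
have [opt_trunc utility_trunc] := optimal_of_upper_bound psi_sch ub_trunc lb_trunc.
exists psi; split.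
- by move=> s _ b; exact: full_pers.
- exact: opt_full.
- by move=> s _ b; exact: psi_pers.
- exact: opt_trunc.
- by rewrite utility_full utility_trunc.
Qed.
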